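(* Let $p:\mathscr{E}\to\mathscr{B}$ be a monoidal closed refinement system which is also a bifibration. Let $R$ be an object of $\mathscr{E}$ with $p(R)=A$, let $S$ be an object of $\mathscr{E}$ with $p(S)=B$, and let $f:A\to B$ be a morphism of $\mathscr{B}$. Then there are isomorphisms in the fibres $$ f_!(R)\;\cong\; eval_!\big(R\otimes [f]\big) \qquad\text{and}\qquad f^*(S)\;\cong\; dni^*\big(S / [f]\big).$$ Here $eval:A\otimes(A\multimap B)\to B$ is the left evaluation map, and $dni:A\to B/(A\multimap B)$ is the right currying of $eval$.
   Context: A monoidal closed refinement system is a functor $p:\mathscr{E}\to\mathscr{B}$ between monoidal closed categories that preserves the monoidal closed structure up to coherent isomorphism. In a monoidal closed category: - $A\multimap B$ denotes the left internal hom, with $\hom(A\otimes X,B)\cong\hom(X,A\multimap B)$; - $B/C$ denotes the right internal hom, with $\hom(X\otimes C,B)\cong\hom(X,B/C)$. For a morphism $f:A\to B$ of $\mathscr{B}$, $curry(f):I\to A\multimap B$ is the morphism corresponding to $f$ under $A\otimes I\cong A$. Since $p$ is a bifibration, every morphism $f:A\to B$ of $\mathscr{B}$ has: - a pushforward $f_!$, sending each $R$ with $p(R)=A$ to $f_!R$ with $p(f_!R)=B$, such that morphisms $f_!R\to R'$ over $g$ correspond bijectively to morphisms $R\to R'$ over $g\circ f$; - a pullback $f^*$, sending each $S$ with $p(S)=B$ to $f^*S$ with $p(f^*S)=A$, such that morphisms $S'\to f^*S$ over $e$ correspond bijectively to morphisms $S'\to S$ over $f\circ e$. The graph of $f$ is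 $[f]:=curry(f)_!(I)$, where $I$ is the monoidal unit of $\mathscr{E}$ (lying over the unit of $\mathscr{B}$). It lies over $A\multimap B$. Hence $R\otimes[f]$ lies over $A\otimes(A\multimap B)$, and $S/[f]$ lies over $B/(A\multimap B)$. *)

(* Equality of morphisms is Leibniz equality. *)

Set Implicit Arguments.
Unset Strict Implicit.

Record Category := {
  Obj :> Type;
  Hom : Obj -> Obj -> Type;
  idm : forall A, Hom A A;
  comp : forall A B C, Hom B C -> Hom A B -> Hom A C;
  comp_id_l : forall A B (f : Hom A B), comp (idm B) f = f;
  comp_id_r : forall A B (f : Hom A B), comp f (idm A) = f;
  comp_assoc : forall A B C D (h : Hom C D) (g : Hom B C) (f : Hom A B),
      comp h (comp g f) = comp (comp h g) f
}.

Arguments Hom {c} _ _.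
Arguments idm {c} A.
Arguments comp {c A B C} _ _.

Notation "g ∘ f" := (comp g f) (at level 40, left associativity).

Definition is_iso (C : Category) (X Y : C) (h : Hom X Y) : Prop :=
  exists k : Hom Y X, k ∘ h = idm X /\ h ∘ k = idm Y.

Definition castHom (C : Category) (X X' Y Y' : C)
    (e1 : X = X') (e2 : Y = Y') (h : Hom X Y) : Hom X' Y' :=
  match e1 in _ = X1 return Hom X1 Y' with
  | eq_refl => match e2 in _ = Y1 return Hom X Y1 with
               | eq_refl => h
               end
  end.

Record Functor (C D : Category) := {
  fobj :> C -> D;
  fmap : forall X Y : C, Hom X Y -> Hom (fobj X) (fobj Y);
  fmap_id : forall X, fmap (idm X) = idm (fobj X);
  fmap_comp : forall X Y Z (g : Hom Y Z) (f : Hom X Y),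
      fmap (g ∘ f) = fmap g ∘ fmap f
}.

Arguments fmap {C D} f0 {X Y} _.

(* A ⊗ B = tens A B ; A ⊸ B = lhom A B (left internal hom,
   hom(A ⊗ X, B) ≅ hom(X, A ⊸ B)) ; B / C = rhom B C (right internal hom,
   hom(X ⊗ C, B) ≅ hom(X, B / C)). *)

Record MonClosedCat := {
  mcat :> Category;
  tens : mcat -> mcat -> mcat;
  tensm : forall A A' B B' : mcat,
      Hom A A' -> Hom B B' -> Hom (tens A B) (tens A' B');
  tensm_id : forall A B : mcat, tensm (idm A) (idm B) = idm (tens A B);
  tensm_comp : forall (A A' A'' B B' B'' : mcat)
      (f : Hom A A') (f' : Hom A' A'') (g : Hom B B') (g' : Hom B' B''),
      tensm (f' ∘ f) (g' ∘ g) = tensm f' g' ∘ tensm f g;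
  munit : mcat;
  assoc : forall A B C : mcat, Hom (tens (tens A B) C) (tens A (tens B C));
  assoc_inv : forall A B C : mcat, Hom (tens A (tens B C)) (tens (tens A B) C);
  assoc_inv_l : forall A B C : mcat, assoc_inv A B C ∘ assoc A B C = idm _;
  assoc_inv_r : forall A B C : mcat, assoc A B C ∘ assoc_inv A B C = idm _;
  assoc_nat : forall (A A' B B' C C' : mcat)
      (f : Hom A A') (g : Hom B B') (h : Hom C C'),
      tensm f (tensm g h) ∘ assoc A B C = assoc A' B' C' ∘ tensm (tensm f g) h;
  lunit : forall A : mcat, Hom (tens munit A) A;
  lunit_inv : forall A : mcat, Hom A (tens munit A);
  lunit_inv_l : forall A : mcat, lunit_inv A ∘ lunit A = idm _;
  lunit_inv_r : forall A : mcat, lunit A ∘ lunit_inv A = idm _;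
  lunit_nat : forall (A A' : mcat) (f : Hom A A'),
      f ∘ lunit A = lunit A' ∘ tensm (idm munit) f;
  runit : forall A : mcat, Hom (tens A munit) A;
  runit_inv : forall A : mcat, Hom A (tens A munit);
  runit_inv_l : forall A : mcat, runit_inv A ∘ runit A = idm _;
  runit_inv_r : forall A : mcat, runit A ∘ runit_inv A = idm _;
  runit_nat : forall (A A' : mcat) (f : Hom A A'),
      f ∘ runit A = runit A' ∘ tensm f (idm munit);
  pentagon : forall A B C D : mcat,
      tensm (idm A) (assoc B C D) ∘ assoc A (tens B C) D
        ∘ tensm (assoc A B C) (idm D)
      = assoc A B (tens C D) ∘ assoc (tens A B) C D;
  triangle : forall A B : mcat,
      tensm (idm A) (lunit B) ∘ assoc A munit B = tensm (runit A) (idm B);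
  lhom : mcat -> mcat -> mcat;
  leval : forall A B : mcat, Hom (tens A (lhom A B)) B;
  lcurry : forall A B X : mcat, Hom (tens A X) B -> Hom X (lhom A B);
  lcurry_beta : forall (A B X : mcat) (h : Hom (tens A X) B),
      leval A B ∘ tensm (idm A) (lcurry h) = h;
  lcurry_eta : forall (A B X : mcat) (k : Hom X (lhom A B)),
      lcurry (leval A B ∘ tensm (idm A) k) = k;
  rhom : mcat -> mcat -> mcat;
  reval : forall B C : mcat, Hom (tens (rhom B C) C) B;
  rcurry : forall B C X : mcat, Hom (tens X C) B -> Hom X (rhom B C);
  rcurry_beta : forall (B C X : mcat) (h : Hom (tens X C) B),
      reval B C ∘ tensm (rcurry h) (idm C) = h;
  rcurry_eta : forall (B C X : mcat) (k : Hom X (rhom B C)),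
      rcurry (reval B C ∘ tensm k (idm C)) = k
}.

Arguments tens {m} _ _.
Arguments tensm {m A A' B B'} _ _.
Arguments munit {m}.
Arguments assoc {m} A B C.
Arguments lunit {m} A.
Arguments runit {m} A.
Arguments lhom {m} _ _.
Arguments leval {m} A B.
Arguments lcurry {m A B X} _.
Arguments rhom {m} _ _.
Arguments reval {m} B C.
Arguments rcurry {m B C X} _.

Definition curry (C : MonClosedCat) (A B : C) (f : Hom A B)
  : Hom munit (lhom A B) := lcurry (f ∘ runit A).

Definition eval (C : MonClosedCat) (A B : C) : Hom (tens A (lhom A B)) B :=
  leval A B.

Definition dni (C : MonClosedCat) (A B : C) : Hom A (rhom B (lhom A B)) :=
  rcurry (eval A B).

(* Monoidal closed refinement systems: functors preserving the monoidal
   closed structure up to coherent isomorphism, i.e. strong monoidal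
   functors (invertible coherent mu, eps) whose canonical closed
   comparison maps p(X ⊸ Y) -> pX ⊸ pY and p(X / Y) -> pX / pY are
   invertible. *)

Definition lcomp_map (E B : MonClosedCat) (p : Functor E B)
  (mu : forall X Y : E, Hom (tens (p X) (p Y)) (p (tens X Y))) (X Y : E)
  : Hom (p (lhom X Y)) (lhom (p X) (p Y)) :=
  lcurry (fmap p (leval X Y) ∘ mu X (lhom X Y)).

Definition rcomp_map (E B : MonClosedCat) (p : Functor E B)
  (mu : forall X Y : E, Hom (tens (p X) (p Y)) (p (tens X Y))) (X Y : E)
  : Hom (p (rhom X Y)) (rhom (p X) (p Y)) :=
  rcurry (fmap p (reval X Y) ∘ mu (rhom X Y) Y).

Record MCRefSys (E B : MonClosedCat) := {
  rfun :> Functor E B;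
  mu : forall X Y : E, Hom (tens (rfun X) (rfun Y)) (rfun (tens X Y));
  mu_inv : forall X Y : E, Hom (rfun (tens X Y)) (tens (rfun X) (rfun Y));
  mu_inv_l : forall X Y : E, mu_inv X Y ∘ mu X Y = idm _;
  mu_inv_r : forall X Y : E, mu X Y ∘ mu_inv X Y = idm _;
  mu_nat : forall (X X' Y Y' : E) (f : Hom X X') (g : Hom Y Y'),
      fmap rfun (tensm f g) ∘ mu X Y = mu X' Y' ∘ tensm (fmap rfun f) (fmap rfun g);
  eps : Hom (@munit B) (rfun munit);
  eps_inv : Hom (rfun munit) (@munit B);
  eps_inv_l : eps_inv ∘ eps = idm _;
  eps_inv_r : eps ∘ eps_inv = idm _;
  mu_assoc : forall X Y Z : E,
      fmap rfun (assoc X Y Z) ∘ mu (tens X Y) Z ∘ tensm (mu X Y) (idm (rfun Z))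
      = mu X (tens Y Z) ∘ tensm (idm (rfun X)) (mu Y Z)
          ∘ assoc (rfun X) (rfun Y) (rfun Z);
  mu_lunit : forall X : E,
      fmap rfun (lunit X) ∘ mu munit X ∘ tensm eps (idm (rfun X)) = lunit (rfun X);
  mu_runit : forall X : E,
      fmap rfun (runit X) ∘ mu X munit ∘ tensm (idm (rfun X)) eps = runit (rfun X);
  lcomp_inv : forall X Y : E, Hom (lhom (rfun X) (rfun Y)) (rfun (lhom X Y));
  lcomp_inv_l : forall X Y : E, lcomp_inv X Y ∘ lcomp_map mu X Y = idm _;
  lcomp_inv_r : forall X Y : E, lcomp_map mu X Y ∘ lcomp_inv X Y = idm _;
  rcomp_inv : forall X Y : E, Hom (rhom (rfun X) (rfun Y)) (rfun (rhom X Y));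
  rcomp_inv_l : forall X Y : E, rcomp_inv X Y ∘ rcomp_map mu X Y = idm _;
  rcomp_inv_r : forall X Y : E, rcomp_map mu X Y ∘ rcomp_inv X Y = idm _
}.

Arguments mu_inv {E B} m X Y.
Arguments eps_inv {E B} m.
Arguments rcomp_inv {E B} m X Y.

Section Fib.
Variables (E B : Category) (p : Functor E B).

Definition opcartesian (R X : E) (u : Hom R X) : Prop :=
  forall (Y : E) (v : Hom R Y) (h : Hom (p X) (p Y)),
    h ∘ fmap p u = fmap p v ->
    exists! w : Hom X Y, fmap p w = h /\ w ∘ u = v.

Definition cartesian (X S : E) (u : Hom X S) : Prop :=
  forall (Y : E) (v : Hom Y S) (h : Hom (p Y) (p X)),
    fmap p u ∘ h = fmap p v ->
    exists! w : Hom Y X, fmap p w = h /\ u ∘ w = v.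

Definition is_push (R : E) (Bo : B) (g : Hom (p R) Bo)
    (X : E) (eX : p X = Bo) (u : Hom R X) : Prop :=
  opcartesian u /\ castHom eq_refl eX (fmap p u) = g.

Definition is_pull (S : E) (Ao : B) (g : Hom Ao (p S))
    (X : E) (eX : p X = Ao) (u : Hom X S) : Prop :=
  cartesian u /\ castHom eX eq_refl (fmap p u) = g.

Definition bifibration : Prop :=
  (forall (R : E) (Bo : B) (g : Hom (p R) Bo),
      exists (X : E) (eX : p X = Bo) (u : Hom R X), is_push g eX u) /\
  (forall (S : E) (Ao : B) (g : Hom Ao (p S)),
      exists (X : E) (eX : p X = Ao) (u : Hom X S), is_pull g eX u).

Definition vert_iso (Bo : B) (X Y : E) (eX : p X = Bo) (eY : p Y = Bo)
    (w : Hom X Y) : Prop :=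
  is_iso w /\ castHom eX eY (fmap p w) = idm Bo.

End Fib.

Arguments opcartesian {E B} p {R X} u.
Arguments cartesian {E B} p {X S} u.
Arguments is_push {E B} p {R Bo} g {X} eX u.
Arguments is_pull {E B} p {S Ao} g {X} eX u.
Arguments bifibration {E B} p.
Arguments vert_iso {E B} p {Bo X Y} eX eY w.

(* The graph [f] is the pushforward of the unit along curry(f), so currying
   along the opcartesian point I -> [f] makes maps Z -> T over f correspond
   to maps Z ⊗ [f] -> T over eval, and maps out of Z ⊗ [f] are determined by
   their image in the base and their restriction along that point.  Hence the
   opcartesian lift R -> f_!(R) and the composite
   R ≅ R ⊗ I -> R ⊗ [f] -> eval_!(R ⊗ [f]) enjoy the same universal property.
   Dually, currying on the right identifies maps into S / [f] over dni with
   maps into S over f, so f^*(S) and dni^*(S / [f]) are isomorphic cartesian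
   lifts. *)

From Stdlib Require Import ProofIrrelevance.
Set Implicit Arguments.
Unset Strict Implicit.

Section Transport.
Variable C : Category.

Definition eqHom (X Y : C) (e : X = Y) : Hom X Y :=
  match e in _ = Y1 return Hom X Y1 with eq_refl => idm X end.

Lemma eqHom_symK (X Y : C) (e : X = Y) : eqHom (eq_sym e) ∘ eqHom e = idm X.
Proof. destruct e; apply comp_id_l. Qed.

Lemma eqHom_Ksym (X Y : C) (e : X = Y) : eqHom e ∘ eqHom (eq_sym e) = idm Y.
Proof. destruct e; apply comp_id_l. Qed.

Lemma castHom_eqHom (X X' Y Y' : C) (e1 : X = X') (e2 : Y = Y') (h : Hom X Y) :
  castHom e1 e2 h = eqHom e2 ∘ h ∘ eqHom (eq_sym e1).
Proof. destruct e1, e2; cbn; rewrite comp_id_l, comp_id_r; reflexivity. Qed.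

Lemma castHom_comp (X X' Y Y' Z Z' : C) (e1 : X = X') (e2 : Y = Y') (e3 : Z = Z')
    (g : Hom Y Z) (h : Hom X Y) :
  castHom e2 e3 g ∘ castHom e1 e2 h = castHom e1 e3 (g ∘ h).
Proof. destruct e1, e2, e3; reflexivity. Qed.

Lemma castHom_id (X X' : C) (e : X = X') : castHom e e (idm X) = idm X'.
Proof. destruct e; reflexivity. Qed.

Lemma castHom_inj (X X' Y Y' : C) (e1 : X = X') (e2 : Y = Y') (h h' : Hom X Y) :
  castHom e1 e2 h = castHom e1 e2 h' -> h = h'.
Proof. destruct e1, e2; exact (fun H => H). Qed.

(* Equality proofs are irrelevant, so a transport only depends on its endpoints. *)
Lemma castHom_move (X X0 X1 Y Y0 Y1 : C) (e1 : X = X1) (e2 : Y = Y1)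
    (e1' : X0 = X1) (e2' : Y0 = Y1) (e1'' : X = X0) (e2'' : Y = Y0)
    (h : Hom X Y) (g : Hom X0 Y0) :
  castHom e1 e2 h = castHom e1' e2' g -> castHom e1'' e2'' h = g.
Proof.
  destruct e1', e2'; rewrite (proof_irrelevance _ e1'' e1), (proof_irrelevance _ e2'' e2).
  exact (fun H => H).
Qed.

Lemma castHom_symK (X X' Y Y' : C) (e1 : X = X') (e2 : Y = Y') (h : Hom X' Y') :
  castHom e1 e2 (castHom (eq_sym e1) (eq_sym e2) h) = h.
Proof. destruct e1, e2; reflexivity. Qed.

Lemma comp_cancel_l (X Y Z : C) (a : Hom Y Z) (b : Hom Z Y) (f : Hom X Y) :
  b ∘ a = idm Y -> b ∘ (a ∘ f) = f.
Proof. intros H; rewrite comp_assoc, H, comp_id_l; reflexivity. Qed.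

End Transport.

Section MonoidalClosed.
Variable C : MonClosedCat.

Lemma tensm_comp_idl (A B B' B'' : C) (g : Hom B B') (g' : Hom B' B'') :
  tensm (idm A) (g' ∘ g) = tensm (idm A) g' ∘ tensm (idm A) g.
Proof. rewrite <- tensm_comp, comp_id_l; reflexivity. Qed.

Lemma tensm_comp_idr (A A' A'' B : C) (g : Hom A A') (g' : Hom A' A'') :
  tensm (g' ∘ g) (idm B) = tensm g' (idm B) ∘ tensm g (idm B).
Proof. rewrite <- tensm_comp, comp_id_l; reflexivity. Qed.

Lemma tensm_split_l (A A' B B' : C) (f : Hom A A') (g : Hom B B') :
  tensm f g = tensm f (idm B') ∘ tensm (idm A) g.
Proof. rewrite <- tensm_comp, comp_id_l, comp_id_r; reflexivity. Qed.

Lemma tensm_split_r (A A' B B' : C) (f : Hom A A') (g : Hom B B') :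
  tensm f g = tensm (idm A') g ∘ tensm f (idm B).
Proof. rewrite <- tensm_comp, comp_id_l, comp_id_r; reflexivity. Qed.

Lemma eqHom_tens (A A' B B' : C) (a : A = A') (b : B = B') :
  eqHom (f_equal2 tens a b) = tensm (eqHom a) (eqHom b).
Proof.
  destruct a, b; rewrite (proof_irrelevance _ (f_equal2 _ _ _) eq_refl); cbn.
  rewrite tensm_id; reflexivity.
Qed.

Lemma runit_inv_nat (A A' : C) (f : Hom A A') :
  runit_inv A' ∘ f = tensm f (idm munit) ∘ runit_inv A.
Proof.
  rewrite <- (comp_id_r (runit_inv A' ∘ f)), <- (runit_inv_r A), !comp_assoc.
  rewrite <- (comp_assoc _ f), runit_nat, comp_assoc, runit_inv_l, comp_id_l.
  reflexivity.
Qed.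

Lemma lcurry_comp (A B X X' : C) (h : Hom (tens A X) B) (m : Hom X' X) :
  lcurry h ∘ m = lcurry (h ∘ tensm (idm A) m).
Proof.
  rewrite <- (lcurry_eta (lcurry h ∘ m)), tensm_comp_idl, comp_assoc, lcurry_beta.
  reflexivity.
Qed.

Lemma rcurry_comp (B D X X' : C) (h : Hom (tens X D) B) (m : Hom X' X) :
  rcurry h ∘ m = rcurry (h ∘ tensm m (idm D)).
Proof.
  rewrite <- (rcurry_eta (rcurry h ∘ m)), tensm_comp_idr, comp_assoc, rcurry_beta.
  reflexivity.
Qed.

Lemma rcurry_inj (B D X : C) (h h' : Hom (tens X D) B) : rcurry h = rcurry h' -> h = h'.
Proof. intros H; rewrite <- (rcurry_beta h), <- (rcurry_beta h'), H; reflexivity. Qed.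

Lemma eqHom_rhom_rcurry (B B' D D' X : C) (a : B = B') (b : D = D')
    (h : Hom (tens X D) B) :
  eqHom (f_equal2 rhom a b) ∘ rcurry h
  = rcurry (eqHom a ∘ h ∘ tensm (idm X) (eqHom (eq_sym b))).
Proof.
  destruct a, b; rewrite (proof_irrelevance _ (f_equal2 _ _ _) eq_refl); cbn.
  rewrite tensm_id, !comp_id_l, comp_id_r; reflexivity.
Qed.

Lemma eval_curry (A B : C) (f : Hom A B) :
  eval A B ∘ tensm (idm A) (curry f) = f ∘ runit A.
Proof. apply lcurry_beta. Qed.

End MonoidalClosed.

Section Fibrations.
Variables (E B : Category) (p : Functor E B).

Lemma vertical_comp (X Y Z : E) (Bo : B) (eX : p X = Bo) (eY : p Y = Bo) (eZ : p Z = Bo)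
    (w : Hom X Y) (w' : Hom Y Z) :
  castHom eY eZ (fmap p w') = idm Bo -> castHom eX eY (fmap p w) = idm Bo ->
  castHom eX eZ (fmap p (w' ∘ w)) = idm Bo.
Proof.
  intros Hw' Hw; rewrite fmap_comp, <- (castHom_comp eX eY eZ), Hw', Hw; apply comp_id_l.
Qed.

Lemma opcartesian_endo_id (R X : E) (Bo : B) (eX : p X = Bo) (u : Hom R X) (w : Hom X X) :
  opcartesian p u -> castHom eX eX (fmap p w) = idm Bo -> w ∘ u = u -> w = idm X.
Proof.
  intros Hop Hw Hwu; rewrite <- (castHom_id eX) in Hw; apply castHom_inj in Hw.
  destruct (Hop X u (idm (p X))) as [z [_ Hz]]; [apply comp_id_l |].
  transitivity z; [symmetry |]; apply Hz; split.
  all: first [exact Hw | exact Hwu | apply fmap_id | apply comp_id_l].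
Qed.

Lemma cartesian_endo_id (X S : E) (Bo : B) (eX : p X = Bo) (u : Hom X S) (w : Hom X X) :
  cartesian p u -> castHom eX eX (fmap p w) = idm Bo -> u ∘ w = u -> w = idm X.
Proof.
  intros Hc Hw Huw; rewrite <- (castHom_id eX) in Hw; apply castHom_inj in Hw.
  destruct (Hc X u (idm (p X))) as [z [_ Hz]]; [apply comp_id_r |].
  transitivity z; [symmetry |]; apply Hz; split.
  all: first [exact Hw | exact Huw | apply fmap_id | apply comp_id_r].
Qed.

Lemma opcartesian_vert_iso (R Z X Y : E) (Bo : B) (eX : p X = Bo) (eY : p Y = Bo)
    (u : Hom R X) (v : Hom Z Y) (w : Hom X Y) (w' : Hom Y X) :
  opcartesian p u -> opcartesian p v ->
  castHom eX eY (fmap p w) = idm Bo -> castHom eY eX (fmap p w') = idm Bo ->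
  w' ∘ (w ∘ u) = u -> w ∘ (w' ∘ v) = v -> vert_iso p eX eY w.
Proof.
  intros Hu Hv Hw Hw' Hu_id Hv_id; split; [exists w'; split | exact Hw].
  - apply (opcartesian_endo_id Hu (vertical_comp Hw' Hw)).
    rewrite <- comp_assoc; exact Hu_id.
  - apply (opcartesian_endo_id Hv (vertical_comp Hw Hw')).
    rewrite <- comp_assoc; exact Hv_id.
Qed.

Lemma cartesian_vert_iso (X Y S T : E) (Bo : B) (eX : p X = Bo) (eY : p Y = Bo)
    (u : Hom X S) (v : Hom Y T) (w : Hom X Y) (w' : Hom Y X) :
  cartesian p u -> cartesian p v ->
  castHom eX eY (fmap p w) = idm Bo -> castHom eY eX (fmap p w') = idm Bo ->
  u ∘ (w' ∘ w) = u -> v ∘ (w ∘ w') = v -> vert_iso p eX eY w.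
Proof.
  intros Hu Hv Hw Hw' Hu_id Hv_id; split; [exists w'; split | exact Hw].
  - exact (cartesian_endo_id Hu (vertical_comp Hw' Hw) Hu_id).
  - exact (cartesian_endo_id Hv (vertical_comp Hw Hw') Hv_id).
Qed.

Lemma opcartesian_factor_vertical (R X Y : E) (A Bo : B) (eR : p R = A)
    (eX : p X = Bo) (eY : p Y = Bo) (g : Hom A Bo) (u : Hom R X) (v : Hom R Y) :
  opcartesian p u -> castHom eR eX (fmap p u) = g -> castHom eR eY (fmap p v) = g ->
  exists w : Hom X Y, w ∘ u = v /\ castHom eX eY (fmap p w) = idm Bo.
Proof.
  intros Hop Hu Hv.
  destruct (Hop Y v (castHom (eq_sym eX) (eq_sym eY) (idm Bo))) as [w [[Hpw Hwu] _]].
  - apply (castHom_inj (e1 := eR) (e2 := eY)).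
    rewrite <- (castHom_comp eR eX eY), castHom_symK, Hu, Hv; apply comp_id_l.
  - exists w; split; [exact Hwu | rewrite Hpw; apply castHom_symK].
Qed.

Lemma cartesian_factor_vertical (X Y S : E) (Bo Bs : B) (eX : p X = Bo) (eY : p Y = Bo)
    (eS : p S = Bs) (g : Hom Bo Bs) (u : Hom X S) (v : Hom Y S) :
  cartesian p u -> castHom eX eS (fmap p u) = g -> castHom eY eS (fmap p v) = g ->
  exists w : Hom Y X, u ∘ w = v /\ castHom eY eX (fmap p w) = idm Bo.
Proof.
  intros Hc Hu Hv.
  destruct (Hc Y v (castHom (eq_sym eY) (eq_sym eX) (idm Bo))) as [w [[Hpw Huw] _]].
  - apply (castHom_inj (e1 := eY) (e2 := eS)).
    rewrite <- (castHom_comp eY eX eS), castHom_symK, Hu, Hv; apply comp_id_r.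
  - exists w; split; [exact Huw | rewrite Hpw; apply castHom_symK].
Qed.

End Fibrations.

Section RefinementSystem.
Variables (E Bc : MonClosedCat) (p : MCRefSys E Bc).

Lemma fmap_tensm (X X' Y Y' : E) (f : Hom X X') (g : Hom Y Y') :
  fmap p (tensm f g) = mu p X' Y' ∘ tensm (fmap p f) (fmap p g) ∘ mu_inv p X Y.
Proof. rewrite <- (mu_nat p), <- comp_assoc, mu_inv_r, comp_id_r; reflexivity. Qed.

Lemma fmap_runit_mu (Z : E) :
  fmap p (runit Z) ∘ mu p Z munit = runit (p Z) ∘ tensm (idm (p Z)) (eps_inv p).
Proof.
  rewrite <- (mu_runit p Z), <- !comp_assoc, <- tensm_comp_idl, eps_inv_r, tensm_id, comp_id_r.
  reflexivity.
Qed.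

Lemma fmap_runit_inv (Z : E) :
  fmap p (runit_inv Z) = mu p Z munit ∘ tensm (idm (p Z)) (eps p) ∘ runit_inv (p Z).
Proof.
  transitivity (fmap p (runit_inv Z) ∘ (runit (p Z) ∘ runit_inv (p Z))).
  - rewrite runit_inv_r, comp_id_r; reflexivity.
  - rewrite <- (mu_runit p Z), !comp_assoc, <- fmap_comp, runit_inv_l, fmap_id, comp_id_l.
    reflexivity.
Qed.

Lemma fmap_leval_mu (X Y : E) :
  fmap p (leval X Y) ∘ mu p X (lhom X Y)
  = leval (p X) (p Y) ∘ tensm (idm (p X)) (lcomp_map (mu p) X Y).
Proof. unfold lcomp_map; rewrite lcurry_beta; reflexivity. Qed.

Lemma fmap_lcurry (X Y Z : E) (h : Hom (tens X Z) Y) :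
  fmap p (lcurry h) = lcomp_inv p X Y ∘ lcurry (fmap p h ∘ mu p X Z).
Proof.
  assert (H : lcomp_map (mu p) X Y ∘ fmap p (lcurry h) = lcurry (fmap p h ∘ mu p X Z)).
  { unfold lcomp_map; rewrite lcurry_comp; f_equal.
    rewrite <- comp_assoc, <- (fmap_id p X), <- mu_nat, comp_assoc, <- fmap_comp, lcurry_beta.
    reflexivity. }
  rewrite <- H, comp_assoc, lcomp_inv_l, comp_id_l; reflexivity.
Qed.

Lemma fmap_rcurry (X Y Z : E) (h : Hom (tens X Z) Y) :
  fmap p (rcurry h) = rcomp_inv p Y Z ∘ rcurry (fmap p h ∘ mu p X Z).
Proof.
  assert (H : rcomp_map (mu p) Y Z ∘ fmap p (rcurry h) = rcurry (fmap p h ∘ mu p X Z)).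
  { unfold rcomp_map; rewrite rcurry_comp; f_equal.
    rewrite <- comp_assoc, <- (fmap_id p Z), <- mu_nat, comp_assoc, <- fmap_comp, rcurry_beta.
    reflexivity. }
  rewrite <- H, comp_assoc, rcomp_inv_l, comp_id_l; reflexivity.
Qed.

(* Maps out of [Z ⊗ G] are determined by their image in the base and by their
   restriction along [Z ⊗ u], because their curried forms factor through [u]. *)
Lemma opcartesian_tens_ext (Z W G T : E) (u : Hom W G) (a b : Hom (tens Z G) T) :
  opcartesian p u -> fmap p a = fmap p b ->
  a ∘ tensm (idm Z) u = b ∘ tensm (idm Z) u -> a = b.
Proof.
  intros Hop Hpab Hab.
  destruct (Hop (lhom Z T) (lcurry b ∘ u) (fmap p (lcurry b))) as [w [_ Hw]];
    [symmetry; apply fmap_comp |].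
  assert (Hcurry : lcurry a = lcurry b).
  { transitivity w; [symmetry |]; apply Hw; split.
    - rewrite !fmap_lcurry, Hpab; reflexivity.
    - rewrite !lcurry_comp, Hab; reflexivity.
    - reflexivity.
    - reflexivity. }
  rewrite <- (lcurry_beta a), <- (lcurry_beta b), Hcurry; reflexivity.
Qed.

End RefinementSystem.

Section Graph.
Variables (E Bc : MonClosedCat) (p : MCRefSys E Bc) (A B : Bc) (f : Hom A B).
Variables (G : E) (eG : p G = lhom A B) (uG : Hom munit G).
Hypothesis HG : is_push p (curry f ∘ eps_inv p) eG uG.

Definition eval_over (Z : E) (eZ : p Z = A) : Hom (p (tens Z G)) B :=
  castHom (f_equal2 tens (eq_sym eZ) (eq_sym eG)) eq_refl (eval A B) ∘ mu_inv p Z G.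

Definition dni_over (S : E) (eS : p S = B) : Hom A (p (rhom S G)) :=
  rcomp_inv p S G ∘ castHom eq_refl (f_equal2 rhom (eq_sym eS) (eq_sym eG)) (dni A B).

Lemma eval_over_eqHom (Z : E) (eZ : p Z = A) :
  eval_over eZ = eval A B ∘ tensm (eqHom eZ) (eqHom eG) ∘ mu_inv p Z G.
Proof.
  unfold eval_over; rewrite castHom_eqHom, comp_id_l.
  rewrite (proof_irrelevance _ (eq_sym _) (f_equal2 tens eZ eG)), eqHom_tens; reflexivity.
Qed.

Lemma graph_point : fmap p uG = eqHom (eq_sym eG) ∘ curry f ∘ eps_inv p.
Proof.
  destruct HG as [_ HpG]; rewrite castHom_eqHom, comp_id_r in HpG.
  rewrite <- comp_assoc, <- HpG, comp_assoc, eqHom_symK, comp_id_l; reflexivity.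
Qed.

Lemma graph_transpose (Z T : E) (eZ : p Z = A) (eT : p T = B) (u : Hom Z T) :
  castHom eZ eT (fmap p u) = f ->
  exists k : Hom (tens Z G) T,
    k ∘ tensm (idm Z) uG = u ∘ runit Z /\ castHom eq_refl eT (fmap p k) = eval_over eZ.
Proof.
  intros Hu; rewrite eval_over_eqHom; pose proof graph_point as HpG.
  destruct HG as [Hop _]; subst A B; cbn [castHom eqHom] in *; subst f.
  destruct (Hop (lhom Z T) (lcurry (u ∘ runit Z)) (lcomp_inv p Z T ∘ eqHom eG))
    as [w [[Hpw Hw] _]].
  { rewrite HpG, fmap_lcurry, fmap_comp, <- (comp_assoc (fmap p u)), fmap_runit_mu.
    rewrite (comp_assoc (fmap p u)), <- lcurry_comp, <- !comp_assoc.
    rewrite (comp_cancel_l _ (eqHom_Ksym eG)); reflexivity. }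
  exists (leval Z T ∘ tensm (idm Z) w); split.
  - rewrite <- comp_assoc, <- tensm_comp_idl, Hw, lcurry_beta; reflexivity.
  - rewrite fmap_comp, fmap_tensm, fmap_id, Hpw, !comp_assoc, fmap_leval_mu.
    rewrite <- (comp_assoc (leval _ _)), <- tensm_comp_idl, comp_assoc, lcomp_inv_r, comp_id_l.
    reflexivity.
Qed.

Lemma graph_untranspose (Z T : E) (eZ : p Z = A) (eT : p T = B) (v : Hom (tens Z G) T) :
  castHom eq_refl eT (fmap p v) = eval_over eZ ->
  castHom eZ eT (fmap p (v ∘ tensm (idm Z) uG ∘ runit_inv Z)) = f.
Proof.
  intros Hv; rewrite eval_over_eqHom in Hv; pose proof graph_point as HpG.
  subst A B; cbn [castHom eqHom] in *.
  rewrite !fmap_comp, Hv, fmap_tensm, fmap_id, fmap_runit_inv.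
  assert (Hcurry : eqHom eG ∘ fmap p uG ∘ eps p = curry f).
  { rewrite HpG, <- !comp_assoc, eps_inv_l, comp_id_r, (comp_cancel_l _ (eqHom_Ksym eG)).
    reflexivity. }
  rewrite <- !comp_assoc, (comp_cancel_l _ (mu_inv_l p Z G)).
  rewrite (comp_cancel_l _ (mu_inv_l p Z munit)), (comp_assoc (tensm _ (fmap p uG))).
  rewrite <- tensm_comp_idl, (comp_assoc (tensm _ (eqHom eG))), <- tensm_comp_idl.
  rewrite (comp_assoc (eqHom eG)), Hcurry, comp_assoc.
  rewrite eval_curry, <- comp_assoc, runit_inv_r; apply comp_id_r.
Qed.

Lemma rcurry_over_dni (Z S : E) (eZ : p Z = A) (eS : p S = B) (k : Hom (tens Z G) S) :
  castHom eq_refl eS (fmap p k) = eval_over eZ <->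
  castHom eZ eq_refl (fmap p (rcurry k)) = dni_over eS.
Proof.
  rewrite eval_over_eqHom; unfold dni_over, dni; subst A B.
  rewrite !castHom_eqHom; cbn [eqHom eq_sym].
  rewrite eqHom_rhom_rcurry, eq_sym_involutive, fmap_rcurry, !comp_id_l, !comp_id_r.
  split; intros H.
  - rewrite H, <- comp_assoc, mu_inv_l, comp_id_r; reflexivity.
  - apply (f_equal (comp (rcomp_map (mu p) S G))) in H.
    rewrite !comp_assoc, rcomp_inv_r, !comp_id_l in H; apply rcurry_inj in H.
    rewrite <- H, <- comp_assoc, mu_inv_r, comp_id_r; reflexivity.
Qed.

(* Currying turns reindexing along [w] into precomposition with [w]. *)
Lemma eval_over_vertical (Z Z' T : E) (eZ : p Z = A) (eZ' : p Z' = A) (eT : p T = B)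
    (k : Hom (tens Z G) T) (w : Hom Z' Z) :
  castHom eq_refl eT (fmap p k) = eval_over eZ -> castHom eZ' eZ (fmap p w) = idm A ->
  castHom eq_refl eT (fmap p (k ∘ tensm w (idm G))) = eval_over eZ'.
Proof.
  intros Hk Hw; apply rcurry_over_dni in Hk; apply rcurry_over_dni.
  rewrite <- rcurry_comp, fmap_comp, <- (castHom_comp eZ' eZ eq_refl), Hk, Hw; apply comp_id_r.
Qed.

Lemma push_eval_vert_iso (R X Y : E) (eR : p R = A) (eX : p X = B) (eY : p Y = B)
    (uX : Hom R X) (uY : Hom (tens R G) Y) :
  is_push p (castHom (eq_sym eR) eq_refl f) eX uX -> is_push p (eval_over eR) eY uY ->
  exists w : Hom X Y, vert_iso p eX eY w.
Proof.
  intros [HopX HuX] [HopY HuY].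
  pose proof (castHom_move eR eX HuX) as HuX_f.
  destruct (graph_transpose HuX_f) as [k [Hk_uG Hk]].
  destruct (opcartesian_factor_vertical HopX HuX_f (graph_untranspose HuY)) as [w [Hw Hwv]].
  destruct (opcartesian_factor_vertical HopY HuY Hk) as [w' [Hw' Hw'v]].
  exists w; apply (opcartesian_vert_iso HopX HopY Hwv Hw'v).
  - rewrite Hw, !comp_assoc, Hw', Hk_uG, <- comp_assoc, runit_inv_r; apply comp_id_r.
  - rewrite Hw'; apply (opcartesian_tens_ext (proj1 HG)).
    + apply (castHom_inj (e1 := eq_refl) (e2 := eY)).
      rewrite HuY, fmap_comp, <- (castHom_comp eq_refl eX eY), Hwv, Hk; apply comp_id_l.
    + rewrite <- comp_assoc, Hk_uG, comp_assoc, Hw, <- !comp_assoc, runit_inv_l, comp_id_r.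
      reflexivity.
Qed.

Lemma pull_dni_vert_iso (S X Y : E) (eS : p S = B) (eX : p X = A) (eY : p Y = A)
    (uX : Hom X S) (uY : Hom Y (rhom S G)) :
  is_pull p (castHom eq_refl (eq_sym eS) f) eX uX -> is_pull p (dni_over eS) eY uY ->
  exists w : Hom X Y, vert_iso p eX eY w.
Proof.
  intros [HcX HuX] [HcY HuY].
  pose proof (castHom_move eX eS HuX) as HuX_f.
  destruct (graph_transpose HuX_f) as [k [Hk_uG Hk]].
  assert (HuY_eval : castHom eq_refl eS (fmap p (reval S G ∘ tensm uY (idm G))) = eval_over eY).
  { apply rcurry_over_dni; rewrite rcurry_eta; exact HuY. }
  destruct (cartesian_factor_vertical HcY HuY (proj1 (rcurry_over_dni _ _ _) Hk))
    as [w [Hw Hwv]].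
  destruct (cartesian_factor_vertical HcX HuX_f (graph_untranspose HuY_eval))
    as [w' [Hw' Hw'v]].
  exists w; apply (cartesian_vert_iso HcX HcY Hwv Hw'v).
  - rewrite comp_assoc, Hw'.
    transitivity (k ∘ tensm (idm X) uG ∘ runit_inv X).
    + rewrite <- (rcurry_beta k), <- Hw, <- !comp_assoc; f_equal.
      rewrite runit_inv_nat, tensm_comp_idr, (comp_assoc (tensm _ uG)), <- tensm_split_r.
      rewrite (tensm_split_l w uG), !comp_assoc; reflexivity.
    + rewrite Hk_uG, <- comp_assoc, runit_inv_r; apply comp_id_r.
  - rewrite comp_assoc, Hw, rcurry_comp, <- (rcurry_eta uY); f_equal.
    apply (opcartesian_tens_ext (proj1 HG)).
    + apply (castHom_inj (e1 := eq_refl) (e2 := eS)).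
      rewrite (eval_over_vertical Hk Hw'v), HuY_eval; reflexivity.
    + rewrite <- comp_assoc, <- (tensm_split_l w' uG), (tensm_split_r w' uG), comp_assoc, Hk_uG.
      rewrite <- comp_assoc, <- runit_nat, comp_assoc, Hw', <- comp_assoc, runit_inv_l.
      apply comp_id_r.
Qed.
End Graph.

Theorem mainTheorem6 (E Bc : MonClosedCat) (p : MCRefSys E Bc)
  (Hbif : bifibration p)
  (R S : E) (A B : Bc) (eR : p R = A) (eS : p S = B) (f : Hom A B)
  (* a choice of the graph [f] := curry(f)_!(I): the unit I of E lies over
     the unit of Bc via the structure iso eps, so we push along
     curry(f) ∘ eps^-1 : p I -> A ⊸ B *)
  (G : E) (eG : p G = lhom A B) (uG : Hom (@munit E) G)
  (HG : is_push p (curry f ∘ eps_inv p) eG uG) :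
  (* f_!(R) ≅ eval_!(R ⊗ [f]) in the fibre over B, for any choices of
     these pushforwards; R ⊗ [f] lies over A ⊗ (A ⊸ B) via
     mu^-1 : p(R ⊗ [f]) ≅ p R ⊗ p [f] = A ⊗ (A ⊸ B) *)
  (forall (X : E) (eX : p X = B) (uX : Hom R X)
          (Y : E) (eY : p Y = B) (uY : Hom (tens R G) Y),
     is_push p (castHom (eq_sym eR) eq_refl f) eX uX ->
     is_push p (castHom (f_equal2 tens (eq_sym eR) (eq_sym eG)) eq_refl
                        (eval A B) ∘ mu_inv p R G) eY uY ->
     exists w : Hom X Y, vert_iso p eX eY w)
  /\
  (* f^*(S) ≅ dni^*(S / [f]) in the fibre over A, for any choices of these
     pullbacks; S / [f] lies over B / (A ⊸ B) via the closed comparison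
     iso p(S / [f]) ≅ p S / p [f] = B / (A ⊸ B) *)
  (forall (X : E) (eX : p X = A) (uX : Hom X S)
          (Y : E) (eY : p Y = A) (uY : Hom Y (rhom S G)),
     is_pull p (castHom eq_refl (eq_sym eS) f) eX uX ->
     is_pull p (rcomp_inv p S G ∘
                castHom eq_refl (f_equal2 rhom (eq_sym eS) (eq_sym eG))
                        (dni A B)) eY uY ->
     exists w : Hom X Y, vert_iso p eX eY w).
Proof.
  (* [Hbif] only guarantees that the pushforwards and pullbacks quantified over exist. *)
  split.
  - intros X eX uX Y eY uY HX HY; exact (push_eval_vert_iso HG HX HY).
  - intros X eX uX Y eY uY HX HY; exact (pull_dni_vert_iso HG HX HY).
Qed.
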